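(* Let $(X,d)$ be a locally compact, geodesically complete CAT(0)-space connected at infinity, and let $d'$ be a metric on $X$ such that $(X,d')$ is a locally compact geodesically complete CAT(0)-space and, for all $x,y\in X$, $d(x,y)\le 1\iff d'(x,y)\le 1$. Then for every $n\in\mathbb N$ and all $x,y\in X$: $d(x,y)\le n\iff d'(x,y)\le n$, $d(x,y)=n\iff d'(x,y)=n$, and $d(x,y)<n\iff d'(x,y)<n$.
   Context: Geodesically complete: geodesic, and every geodesic segment lies in a complete geodesic. Connected at infinity: the complement of every metric ball is path connected. *)

From Stdlib Require Import Reals List.
Open Scope R_scope.

Definition is_metric {X : Type} (d : X -> X -> R) : Prop :=
  (forall x y, 0 <= d x y) /\
  (forall x y, d x y = 0 <-> x = y) /\
  (forall x y, d x y = d y x) /\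
  (forall x y z, d x z <= d x y + d y z).

Definition isometric_on {X : Type} (d : X -> X -> R) (c : R -> X) (L : R) : Prop :=
  forall s t, 0 <= s <= L -> 0 <= t <= L -> d (c s) (c t) = Rabs (s - t).

Definition geodesic_seg {X : Type} (d : X -> X -> R) (x y : X) (c : R -> X) : Prop :=
  c 0 = x /\ c (d x y) = y /\ isometric_on d c (d x y).

Definition geodesic_space {X : Type} (d : X -> X -> R) : Prop :=
  is_metric d /\ forall x y, exists c, geodesic_seg d x y c.

Definition geodesic_line {X : Type} (d : X -> X -> R) (g : R -> X) : Prop :=
  forall s t, d (g s) (g t) = Rabs (s - t).

Definition geodesically_complete {X : Type} (d : X -> X -> R) : Prop :=
  geodesic_space d /\
  forall (c : R -> X) (L : R), 0 < L -> isometric_on d c L ->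
    exists g, geodesic_line d g /\ forall t, 0 <= t <= L -> g t = c t.

Definition edist (p q : R * R) : R :=
  sqrt ((fst p - fst q) ^ 2 + (snd p - snd q) ^ 2).

(* point of the segment [a,b] at distance s from a, for a segment of length L *)
Definition eseg (a b : R * R) (L s : R) : R * R :=
  if Req_dec_T L 0 then a
  else (fst a + (s / L) * (fst b - fst a), snd a + (s / L) * (snd b - snd a)).

(* A side of a geodesic triangle together with its comparison side:
   start point u, end point v, geodesic c from u to v, comparison points ub vb. *)
Record side (X : Type) := Side { s_u : X; s_v : X; s_c : R -> X; s_ub : R * R; s_vb : R * R }.
Arguments Side {X}.
Arguments s_u {X}. Arguments s_v {X}. Arguments s_c {X}.
Arguments s_ub {X}. Arguments s_vb {X}.

(* CAT(0): geodesic, and for every geodesic triangle and every comparison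
   triangle in the Euclidean plane, the distance between any two points of the
   triangle is at most the distance of their comparison points. *)
Definition CAT0 {X : Type} (d : X -> X -> R) : Prop :=
  geodesic_space d /\
  forall (x y z : X) (cxy cyz czx : R -> X) (xb yb zb : R * R),
    geodesic_seg d x y cxy -> geodesic_seg d y z cyz -> geodesic_seg d z x czx ->
    edist xb yb = d x y -> edist yb zb = d y z -> edist zb xb = d z x ->
    forall S1 S2 : side X,
      In S1 (Side x y cxy xb yb :: Side y z cyz yb zb :: Side z x czx zb xb :: nil) ->
      In S2 (Side x y cxy xb yb :: Side y z cyz yb zb :: Side z x czx zb xb :: nil) ->
      forall s t,
        0 <= s <= d (s_u S1) (s_v S1) -> 0 <= t <= d (s_u S2) (s_v S2) ->
        d (s_c S1 s) (s_c S2 t) <=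
        edist (eseg (s_ub S1) (s_vb S1) (d (s_u S1) (s_v S1)) s)
              (eseg (s_ub S2) (s_vb S2) (d (s_u S2) (s_v S2)) t).

Definition ball {X : Type} (d : X -> X -> R) (x : X) (r : R) : X -> Prop :=
  fun y => d x y < r.

Definition open_set {X : Type} (d : X -> X -> R) (U : X -> Prop) : Prop :=
  forall x, U x -> exists e, 0 < e /\ forall y, ball d x e y -> U y.

Definition compact_set {X : Type} (d : X -> X -> R) (K : X -> Prop) : Prop :=
  forall (I : Type) (U : I -> X -> Prop),
    (forall i, open_set d (U i)) -> (forall x, K x -> exists i, U i x) ->
    exists l : list I, forall x, K x -> exists i, In i l /\ U i x.

Definition locally_compact {X : Type} (d : X -> X -> R) : Prop :=
  forall x, exists K, compact_set d K /\ exists e, 0 < e /\ forall y, ball d x e y -> K y.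

Definition path_in {X : Type} (d : X -> X -> R) (A : X -> Prop) (a b : X) (p : R -> X) : Prop :=
  p 0 = a /\ p 1 = b /\ (forall t, 0 <= t <= 1 -> A (p t)) /\
  forall t, 0 <= t <= 1 -> forall eps, 0 < eps ->
    exists delta, 0 < delta /\
      forall s, 0 <= s <= 1 -> Rabs (s - t) < delta -> d (p s) (p t) < eps.

Definition path_connected {X : Type} (d : X -> X -> R) (A : X -> Prop) : Prop :=
  forall a b, A a -> A b -> exists p, path_in d A a b p.

Definition connected_at_infinity {X : Type} (d : X -> X -> R) : Prop :=
  forall x r, path_connected d (fun y => ~ ball d x r y).

(* Idea: in a geodesic space the relation [d x y <= n] is the n-fold
   composite of [d x y <= 1], so the balls of integer radius agree.  Integer
   distances are then recognised from these balls.  For [n >= 2],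
   [d x y = n] iff [x <> y], [d x y <= n], and at most one point lies within
   [1] of [x] and within [n - 1] of [y]: in a CAT(0) space such a point must
   lie on the unique geodesic from [x] to [y], while for [d x y < n] the
   geodesic from [x] to [y] holds two such points.  For [n = 1], geodesic
   extension gives [d x y = 1] iff [d x y <= 1] and some [z] has [d x z = 2]
   and [d z y <= 1]. *)
From Stdlib Require Import Reals Lra.
Open Scope R_scope.

Lemma edist_axis (u v : R) : edist (u, 0) (v, 0) = Rabs (u - v).
Proof.
  unfold edist; simpl.
  rewrite <- sqrt_Rsqr_abs; f_equal; unfold Rsqr; ring.
Qed.

Lemma eseg_0 (a b : R * R) (L : R) : eseg a b L 0 = a.
Proof.
  destruct a as [a1 a2]; unfold eseg.
  destruct Req_dec_T; [reflexivity|].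
  simpl; f_equal; unfold Rdiv; ring.
Qed.

Lemma eseg_axis_to_origin (L s : R) :
  0 <= s <= L -> eseg (L, 0) (0, 0) L s = (L - s, 0).
Proof.
  intros Hs; unfold eseg.
  destruct Req_dec_T as [HL|HL]; simpl; f_equal; [lra| |]; field; exact HL.
Qed.

Lemma Rlt_iff_of_le_eq (a b r : R) :
  (a <= r <-> b <= r) -> (a = r <-> b = r) -> (a < r <-> b < r).
Proof.
  intros Hle Heq; split; intros Hlt.
  - destruct (Rle_lt_or_eq_dec b r) as [H|H]; [apply Hle; lra|exact H|].
    apply Heq in H; lra.
  - destruct (Rle_lt_or_eq_dec a r) as [H|H]; [apply Hle; lra|exact H|].
    apply Heq in H; lra.
Qed.

Definition first_step_unique {X : Type} (d : X -> X -> R) (n : nat) (x y : X) :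
  Prop :=
  forall z1 z2, d x z1 <= 1 -> d x z2 <= 1 ->
    d z1 y <= INR n -> d z2 y <= INR n -> z1 = z2.

Section Metric.

Variables (X : Type) (d : X -> X -> R).
Hypothesis Hd : is_metric d.

Lemma dist_ge0 (x y : X) : 0 <= d x y.
Proof. apply Hd. Qed.

Lemma dist_eq0 (x y : X) : d x y = 0 <-> x = y.
Proof. apply Hd. Qed.

Lemma dist_xx (x : X) : d x x = 0.
Proof. now apply dist_eq0. Qed.

Lemma dist_sym (x y : X) : d x y = d y x.
Proof. apply Hd. Qed.

Lemma dist_triangle (x y z : X) : d x z <= d x y + d y z.
Proof. apply Hd. Qed.

Lemma dist_le0 (x y : X) : d x y <= 0 <-> x = y.
Proof.
  rewrite <- dist_eq0; pose proof (dist_ge0 x y); lra.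
Qed.

Lemma geodesic_seg_dist (x y : X) (c : R -> X) (s t : R) :
  geodesic_seg d x y c -> 0 <= s <= d x y -> 0 <= t <= d x y ->
  d (c s) (c t) = Rabs (s - t).
Proof. intros (_ & _ & Hc); now apply Hc. Qed.

Lemma geodesic_seg_split (x y : X) (c : R -> X) (s : R) :
  geodesic_seg d x y c -> 0 <= s <= d x y ->
  d x (c s) = s /\ d (c s) y = d x y - s.
Proof.
  intros Hc Hs; pose proof Hc as (Hc0 & Hc1 & _).
  rewrite <- Hc0 at 1; rewrite <- Hc1 at 1.
  rewrite !(geodesic_seg_dist x y) by (auto; lra).
  split; [rewrite Rabs_left1|rewrite Rabs_left1]; lra.
Qed.

Lemma dist_le_S_iff (n : nat) (x y : X) :
  geodesic_space d ->
  d x y <= INR (S n) <-> exists z, d x z <= 1 /\ d z y <= INR n.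
Proof.
  intros [_ Hgeo]; rewrite S_INR; split.
  - intros Hxy; destruct (Hgeo x y) as [c Hc].
    pose proof (pos_INR n); pose proof (dist_ge0 x y).
    set (p := Rmin 1 (d x y)).
    assert (Hp : 0 <= p <= d x y /\ p <= 1 /\ d x y - p <= INR n)
      by (unfold p, Rmin; destruct Rle_dec; lra).
    destruct (geodesic_seg_split x y c p Hc) as [H1 H2]; [lra|].
    exists (c p); lra.
  - intros (z & H1 & H2); pose proof (dist_triangle x z y); lra.
Qed.

Lemma CAT0_between_on_seg (x y z : X) (c : R -> X) :
  CAT0 d -> geodesic_seg d y x c -> d x z + d z y = d x y -> z = c (d z y).
Proof.
  intros [[_ Hgeo] Hcmp] Hc Hbetween.
  destruct (Hgeo x z) as [c1 Hc1]; destruct (Hgeo z y) as [c2 Hc2].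
  pose proof (dist_ge0 x z); pose proof (dist_ge0 z y).
  rewrite (dist_sym x y) in Hbetween.
  (* z, y, x have a degenerate comparison triangle on the first axis *)
  assert (Hzy : edist (d x z, 0) (d y x, 0) = d z y)
    by (rewrite edist_axis, Rabs_left1; lra).
  assert (Hyx : edist (d y x, 0) (0, 0) = d y x)
    by (rewrite edist_axis, Rabs_right; lra).
  assert (Hxz : edist (0, 0) (d x z, 0) = d x z)
    by (rewrite edist_axis, Rabs_left1; lra).
  pose proof (Hcmp z y x c2 c c1 _ _ _ Hc2 Hc Hc1 Hzy Hyx Hxz
    (Side z y c2 (d x z, 0) (d y x, 0)) (Side y x c (d y x, 0) (0, 0))
    ltac:(simpl; auto) ltac:(simpl; auto) 0 (d z y)) as Hle.
  simpl in Hle.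
  rewrite eseg_0, eseg_axis_to_origin, edist_axis in Hle by lra.
  destruct Hc2 as (Hc20 & _).
  rewrite Hc20, Rabs_right in Hle by lra.
  apply dist_le0; lra.
Qed.

Lemma CAT0_first_step_unique (n : nat) (x y : X) :
  CAT0 d -> d x y = INR (S n) -> first_step_unique d n x y.
Proof.
  intros Hcat Hxy z1 z2 Hx1 Hx2 Hy1 Hy2.
  pose proof Hcat as [[_ Hgeo] _]; destruct (Hgeo y x) as [c Hc].
  rewrite S_INR in Hxy.
  pose proof (dist_triangle x z1 y); pose proof (dist_triangle x z2 y).
  rewrite (CAT0_between_on_seg x y z1 c), (CAT0_between_on_seg x y z2 c)
    by (auto; lra).
  f_equal; lra.
Qed.

Lemma geodesic_two_first_steps (n : nat) (x y : X) :
  geodesic_space d -> (0 < n)%nat -> x <> y -> d x y < INR n + 1 ->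
  exists z1 z2, z1 <> z2 /\ d x z1 <= 1 /\ d x z2 <= 1 /\
    d z1 y <= INR n /\ d z2 y <= INR n.
Proof.
  intros [_ Hgeo] Hn Hneq Hxy.
  apply lt_0_INR in Hn.
  assert (Hpos : 0 < d x y).
  { pose proof (dist_ge0 x y); destruct (Req_dec (d x y) 0) as [H0|H0].
    - now apply dist_eq0 in H0.
    - lra. }
  destruct (Hgeo x y) as [c Hc].
  set (a := Rmax 0 (d x y - INR n)); set (b := Rmin 1 (d x y)).
  assert (Hab : 0 <= a < b /\ b <= d x y /\ b <= 1 /\
                d x y - a <= INR n /\ d x y - b <= INR n)
    by (unfold a, b, Rmax, Rmin; do 2 destruct Rle_dec; lra).
  destruct (geodesic_seg_split x y c a Hc) as [Ha1 Ha2]; [lra|].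
  destruct (geodesic_seg_split x y c b Hc) as [Hb1 Hb2]; [lra|].
  exists (c b), (c a); repeat split; try lra.
  intros Heq.
  pose proof (geodesic_seg_dist x y c b a Hc) as Hba.
  rewrite Heq, dist_xx, Rabs_right in Hba; lra.
Qed.

Lemma CAT0_dist_eq_S_iff (n : nat) (x y : X) :
  CAT0 d -> (0 < n)%nat ->
  d x y = INR (S n) <->
  d x y <= INR (S n) /\ x <> y /\ first_step_unique d n x y.
Proof.
  intros Hcat Hn; pose proof (pos_INR n); split.
  - intros Hxy; split; [lra|split].
    + intros <-; rewrite dist_xx, S_INR in Hxy; lra.
    + now apply CAT0_first_step_unique.
  - intros (Hle & Hneq & Huniq).
    destruct (Rle_lt_or_eq_dec _ _ Hle) as [Hlt|Heq]; [exfalso|exact Heq].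
    rewrite S_INR in Hlt.
    destruct (geodesic_two_first_steps n x y (proj1 Hcat) Hn Hneq Hlt)
      as (z1 & z2 & Hne & H1 & H2 & H3 & H4).
    exact (Hne (Huniq z1 z2 H1 H2 H3 H4)).
Qed.

Lemma geodesically_complete_dist_eq1_iff (x y : X) :
  geodesically_complete d ->
  d x y = 1 <-> d x y <= 1 /\ exists z, d x z = 2 /\ d z y <= 1.
Proof.
  intros [[_ Hgeo] Hext]; split.
  - intros Hxy; split; [lra|].
    destruct (Hgeo x y) as [c Hc]; pose proof Hc as (Hc0 & Hc1 & Hiso).
    rewrite Hxy in Hc1, Hiso.
    destruct (Hext c 1 Rlt_0_1 Hiso) as (g & Hg & Hgc).
    rewrite <- Hc0, <- Hc1, <- (Hgc 0), <- (Hgc 1) by lra.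
    exists (g 2); rewrite !Hg.
    split; [rewrite Rabs_left1|rewrite Rabs_right]; lra.
  - intros (Hle & z & Hxz & Hzy).
    pose proof (dist_triangle x y z); rewrite (dist_sym y z) in *; lra.
Qed.

End Metric.

Section TwoMetrics.

Variables (X : Type) (d d' : X -> X -> R).
Hypotheses (Hd : is_metric d) (Hd' : is_metric d').
Hypothesis Hle1 : forall x y, d x y <= 1 <-> d' x y <= 1.

Lemma geodesic_dist_le_nat_iff :
  geodesic_space d -> geodesic_space d' ->
  forall n x y, d x y <= INR n <-> d' x y <= INR n.
Proof.
  intros Hgeo Hgeo' n; induction n as [|n IH]; intros x y.
  - now rewrite (dist_le0 _ d), (dist_le0 _ d').
  - rewrite (dist_le_S_iff _ d), (dist_le_S_iff _ d') by assumption.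
    split; intros (z & H1 & H2); exists z;
      split; [apply Hle1| apply IH| apply Hle1| apply IH]; assumption.
Qed.

Lemma first_step_unique_iff (n : nat) (x y : X) :
  (forall a b, d a b <= INR n <-> d' a b <= INR n) ->
  first_step_unique d n x y <-> first_step_unique d' n x y.
Proof.
  intros Hlen; unfold first_step_unique.
  split; intros Hu z1 z2 H1 H2 H3 H4; apply Hu;
    first [apply Hle1 | apply Hlen]; assumption.
Qed.

End TwoMetrics.

Theorem lemma1 (X : Type) (d d' : X -> X -> R) :
  is_metric d -> locally_compact d -> geodesically_complete d -> CAT0 d ->
  connected_at_infinity d ->
  is_metric d' -> locally_compact d' -> geodesically_complete d' -> CAT0 d' ->
  (forall x y, d x y <= 1 <-> d' x y <= 1) ->
  forall (n : nat) (x y : X),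
    (d x y <= INR n <-> d' x y <= INR n) /\
    (d x y = INR n <-> d' x y = INR n) /\
    (d x y < INR n <-> d' x y < INR n).
Proof.
  intros Hd _ Hgc Hcat _ Hd' _ Hgc' Hcat' Hle1.
  pose proof (geodesic_dist_le_nat_iff X d d' Hd Hd' Hle1
                (proj1 Hgc) (proj1 Hgc')) as Hle.
  assert (HeqS : forall n a b, (0 < n)%nat ->
            d a b = INR (S n) <-> d' a b = INR (S n)).
  { intros n a b Hn.
    rewrite (CAT0_dist_eq_S_iff _ d), (CAT0_dist_eq_S_iff _ d'), Hle,
      (first_step_unique_iff X d d' Hle1 n a b (Hle n)) by assumption.
    reflexivity. }
  assert (Heq : forall n a b, d a b = INR n <-> d' a b = INR n).
  { intros [|[|n]] a b.
    - simpl; now rewrite (dist_eq0 _ d), (dist_eq0 _ d').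
    - change (INR 1) with 1.
      rewrite (geodesically_complete_dist_eq1_iff _ d),
        (geodesically_complete_dist_eq1_iff _ d'), Hle1 by assumption.
      assert (H2 : forall z, d a z = 2 <-> d' a z = 2)
        by (intros z; apply (HeqS 1%nat); auto).
      split; intros (Hab & z & Hz2 & Hzb); split; auto; exists z;
        split; [apply H2| apply Hle1| apply H2| apply Hle1]; assumption.
    - apply HeqS; auto with arith. }
  intros n x y; split; [|split]; auto.
  apply Rlt_iff_of_le_eq; auto.
Qed.
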